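(* Let $1\le d\le n$ be integers with $\gcd(n,d)=1$, and let $2^a$ be the largest power of $2$ dividing $n$. Then $(n,d)$ is a critical pair if and only if $d^2\equiv1\pmod n$, $a\ge1$, and $d\equiv\pm1\pmod{2^a}$.
   Context: A pair of positive integers $(n,d)$ with $d<n$ and $\gcd(n,d)=1$ is a critical pair if the Hirzebruch–Jung expansion $(a_0,\dots,a_r)$ of $n/d$ (defined by $\frac nd=a_0-1/(a_1-1/(\cdots-1/a_r))$, $a_i\ge2$) is symmetric ($a_i=a_{r-i}$ for all $i$), of odd length ($r$ even), and has even central term $a_{r/2}$. The pair $(1,1)$ is not critical. *)

From mathcomp Require Import all_boot all_order all_algebra.
Set Implicit Arguments. Unset Strict Implicit. Unset Printing Implicit Defensive.
Import GRing.Theory Num.Theory.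

Fixpoint hj_value (a0 : nat) (s : seq nat) : rat :=
  match s with
  | [::] => (a0%:R)%R
  | a1 :: s' => (a0%:R - (hj_value a1 s')^-1)%R
  end.

Definition is_hj_expansion (n d : nat) (a0 : nat) (s : seq nat) : Prop :=
  all (fun a => 2 <= a) (a0 :: s) /\
  hj_value a0 s = ((n%:R : rat) / (d%:R : rat))%R.

(* Critical pair: 0 < d < n, gcd(n,d) = 1, and the HJ expansion
   (a0,...,ar) of n/d is symmetric, of odd length (r even), with even
   central term a_{r/2}.  Here r = size s. *)
Definition critical_pair (n d : nat) : Prop :=
  0 < d /\ d < n /\ coprime n d /\
  exists (a0 : nat) (s : seq nat),
    [/\ is_hj_expansion n d a0 s,
        rev (a0 :: s) = a0 :: s,
        ~~ odd (size s)
      & ~~ odd (nth 0 (a0 :: s) (size s)./2)].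

(* The expansion (a_0, ..., a_r) of n/d is encoded by the integer matrix
   M = [a_0 -1; 1 0] ... [a_r -1; 1 0] = [n q; d t] of determinant 1.
   Reversing the expansion transposes M up to signs, so by uniqueness of
   expansions it is symmetric iff q = -d, i.e. iff d^2 = 1 (mod n), and then
   n t = 1 - d^2.  Writing a palindrome as A ++ rev A or A ++ c :: rev A and
   reducing M mod 2, odd length with even centre holds iff n and t are both
   even, i.e. iff n is even and d^2 = 1 (mod 2n).  With n = 2^a m, m odd, the
   Chinese remainder theorem turns this into the stated conditions, because
   for a >= 1, d^2 = 1 (mod 2^(a+1)) iff d = +-1 (mod 2^a). *)

From mathcomp Require Import all_boot all_order all_algebra.
From mathcomp Require Import zify ring lra.

Set Implicit Arguments.
Unset Strict Implicit.
Unset Printing Implicit Defensive.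
Import Order.TTheory GRing.Theory Num.Theory.

Lemma pow2_dvd_mul_succ b x : 2 ^ b %| x * x.+1 -> (2 ^ b %| x) || (2 ^ b %| x.+1).
Proof.
have [x_odd | x_even] := boolP (odd x).
  by rewrite Gauss_dvdr ?coprimeXl ?coprime2n // => ->; rewrite orbT.
by rewrite Gauss_dvdl ?coprimeXl ?coprime2n // => ->.
Qed.

Lemma eq_mod_pow2_odd k m p : m = p %[mod 2 ^ k.+1] -> odd m = odd p.
Proof.
move/(congr1 (modn^~ 2)); rewrite !modn_dvdm ?dvdn_exp //.
by rewrite !modn2; case: (odd m) (odd p) => [] [].
Qed.

Lemma sqr_eq1_mod_pow2 a d : 0 < a ->
  d ^ 2 = 1 %[mod 2 ^ a.+1] <-> d = 1 %[mod 2 ^ a] \/ d + 1 = 0 %[mod 2 ^ a].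
Proof.
case: a => // b _.
have [d_odd | d_even] := boolP (odd d); last first.
  split=> [/eq_mod_pow2_odd | [] /eq_mod_pow2_odd]; rewrite ?oddX ?oddD /=;
  by rewrite (negPf d_even).
have d_gt0 : 0 < d by case: d d_odd.
rewrite !(rwP eqP) !eqn_mod_dvd ?expn_gt0 ?d_gt0 // subn0.
have [x ->] : exists x, d = x.*2.+1.
  by exists d./2; rewrite -[LHS]odd_double_half d_odd.
have -> : x.*2.+1 ^ 2 - 1 = 2 ^ 2 * (x * x.+1) by rewrite -mul2n; nia.
have -> : x.*2.+1 - 1 = 2 * x by rewrite -mul2n; lia.
have -> : x.*2.+1 + 1 = 2 * x.+1 by rewrite -mul2n; lia.
rewrite -[2 ^ b.+2]/(2 ^ (2 + b)) expnD (expnS 2 b) !dvdn_pmul2l //.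
split=> [/pow2_dvd_mul_succ/orP // | [x_dvd | x1_dvd]].
  exact: dvdn_mulr.
exact: dvdn_mull.
Qed.

Lemma sqr_eq1_mod_double n d : 0 < n ->
  ~~ odd n /\ d ^ 2 = 1 %[mod n.*2] <->
  [/\ d ^ 2 = 1 %[mod n], 1 <= logn 2 n
    & d = 1 %[mod 2 ^ logn 2 n] \/ d + 1 = 0 %[mod 2 ^ logn 2 n]].
Proof.
move=> n_gt0; have [m m_odd nE] := pfactor_coprime (isT : prime 2) n_gt0.
rewrite coprime2n in m_odd.
case: (logn 2 n) nE => [|b] nE.
  by rewrite nE muln1 m_odd; split=> [[] | []].
have co_m k : coprime m (2 ^ k) by rewrite coprimeXr // coprimen2.
have n_even : ~~ odd n by rewrite nE oddM oddX andbF.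
have n2E : n.*2 = m * 2 ^ b.+2 by rewrite nE -mul2n (expnS _ b.+1); ring.
have crt k : d ^ 2 = 1 %[mod m * 2 ^ k] <->
    d ^ 2 = 1 %[mod m] /\ d ^ 2 = 1 %[mod 2 ^ k].
  rewrite (rwP eqP) chinese_remainder //.
  by split=> [/andP[/eqP ? /eqP ?] | [/eqP -> /eqP ->]].
have sqr_pow2 := sqr_eq1_mod_pow2 d (ltn0Sn b).
rewrite n_even n2E nE.
split=> [[_ /crt[sqr_m sqr_2]] | [/crt[sqr_m _] _ /sqr_pow2 sqr_2]].
  split; [apply/crt; split=> // | by [] | exact/sqr_pow2].
  by move/(congr1 (modn^~ (2 ^ b.+1))): sqr_2; rewrite !modn_dvdm // dvdn_exp2l.
by split=> //; apply/crt.
Qed.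

Lemma palindrome_split (T : Type) (x0 : T) (l : seq T) : rev l = l ->
  let A := take (size l)./2 l in
  l = if odd (size l) then A ++ nth x0 l (size l)./2 :: rev A else A ++ rev A.
Proof.
move=> l_pal A; have sizeE := odd_double_half (size l).
have revA : rev A = drop (size l - (size l)./2) l.
  by rewrite /A -[in take _ l]l_pal size_rev take_rev revK.
rewrite revA; case: ifP sizeE => l_odd sizeE.
  rewrite (_ : _ - _ = (size l)./2.+1)%N; last by lia.
  by rewrite -drop_nth ?cat_take_drop //; lia.
by rewrite (_ : _ - _ = (size l)./2)%N ?cat_take_drop //; lia.
Qed.

Local Open Scope ring_scope.

Record mat2 := Mat2 { m11 : int; m12 : int; m21 : int; m22 : int }.

Definition mul2 (A B : mat2) : mat2 :=
  Mat2 (m11 A * m11 B + m12 A * m21 B) (m11 A * m12 B + m12 A * m22 B)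
       (m21 A * m11 B + m22 A * m21 B) (m21 A * m12 B + m22 A * m22 B).

Definition one2 : mat2 := Mat2 1 0 0 1.

Definition det2 (A : mat2) : int := m11 A * m22 A - m12 A * m21 A.

(* [twist A] is [D A^T D] with [D = diag(1, -1)], an anti-automorphism
   fixing every [hj_step a]. *)
Definition twist (A : mat2) : mat2 := Mat2 (m11 A) (- m21 A) (- m12 A) (m22 A).

Lemma mul2A : associative mul2.
Proof. by move=> [? ? ? ?] [? ? ? ?] [? ? ? ?]; congr Mat2; rewrite /=; ring. Qed.

Lemma mul1m2 : left_id one2 mul2.
Proof. by move=> [? ? ? ?]; congr Mat2; rewrite /=; ring. Qed.

Lemma mul2m1 : right_id one2 mul2.
Proof. by move=> [? ? ? ?]; congr Mat2; rewrite /=; ring. Qed.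

Lemma det2M A B : det2 (mul2 A B) = det2 A * det2 B.
Proof. by case: A B => ? ? ? ? [? ? ? ?]; rewrite /det2 /=; ring. Qed.

Lemma twistM A B : twist (mul2 A B) = mul2 (twist B) (twist A).
Proof. by case: A B => ? ? ? ? [? ? ? ?]; congr Mat2; rewrite /=; ring. Qed.

Definition hj_step (a : nat) : mat2 := Mat2 a%:Z (-1) 1 0.

Fixpoint hj_mat (l : seq nat) : mat2 :=
  if l is a :: l' then mul2 (hj_step a) (hj_mat l') else one2.

Lemma hj_mat_cons a l : hj_mat (a :: l) = mul2 (hj_step a) (hj_mat l).
Proof. by []. Qed.

Lemma hj_mat_cat l1 l2 : hj_mat (l1 ++ l2) = mul2 (hj_mat l1) (hj_mat l2).
Proof. by elim: l1 => [|a l1 IHl] /=; rewrite ?mul1m2 ?IHl ?mul2A. Qed.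

Lemma hj_mat_rev l : hj_mat (rev l) = twist (hj_mat l).
Proof.
elim: l => [|a l IHl]; first by congr Mat2; rewrite /= oppr0.
rewrite rev_cons -cats1 hj_mat_cat IHl /= mul2m1 twistM.
by congr mul2; congr Mat2; rewrite /= opprK.
Qed.

Lemma det_hj_mat l : det2 (hj_mat l) = 1.
Proof.
elim: l => [|a l IHl] /=; first by rewrite /det2 /=; ring.
by rewrite det2M IHl /det2 /=; ring.
Qed.

Lemma hj_mat_gt0 l : all (leq 2) l -> l != [::] -> 0 < m21 (hj_mat l) < m11 (hj_mat l).
Proof.
case: l => // a0 s.
elim: s a0 => [|a1 s IHs] a0 /andP[a0_ge2 s_ge2]; first by rewrite /=; lia.
rewrite hj_mat_cons; move: (IHs a1 s_ge2).
by case: (hj_mat _) => p q r t /=; nia.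
Qed.

Lemma hj_valueE a0 s : all (leq 2) (a0 :: s) ->
  hj_value a0 s = (m11 (hj_mat (a0 :: s)))%:~R / (m21 (hj_mat (a0 :: s)))%:~R.
Proof.
elim: s a0 => [|a1 s IHs] a0 /andP[_ s_ge2]; first by rewrite /= mulr1 mulr0 addr0 divr1.
have := @hj_mat_gt0 (a1 :: s) s_ge2 isT.
rewrite [hj_value _ _]/= (IHs a1 s_ge2) (hj_mat_cons a0).
case: (hj_mat _) => p q r t /= /andP[r_gt0 r_lt_p].
have p_neq0 : (p%:~R : rat) != 0 by rewrite intr_eq0; lia.
rewrite invf_div !mul1r !mul0r !addr0 mulN1r intrD intrN intrM.
by rewrite mulrBl mulfK.
Qed.

Lemma hj_value_bounds a0 s : all (leq 2) (a0 :: s) ->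
  a0%:R - 1 < hj_value a0 s <= a0%:R /\ (hj_value a0 s = a0%:R -> s = [::]).
Proof.
elim: s a0 => [|a1 s IHs] a0 /andP[_ s_ge2] /=.
  by split=> //; rewrite lexx andbT; lra.
have [/andP[v_lo v_hi] _] := IHs a1 s_ge2.
have a1_ge2 : (2%:R : rat) <= a1%:R by rewrite ler_nat; case/andP: s_ge2.
set v := hj_value a1 s in v_lo v_hi *.
have v_gt1 : 1 < v by lra.
have iv_gt0 : 0 < v^-1 by rewrite invr_gt0; lra.
have iv_lt1 : v^-1 < 1 by rewrite invf_lt1 //; lra.
by split=> [|v_eq]; [apply/andP; split; lra | exfalso; lra].
Qed.

Lemma hj_value_head a0 s b0 s' : all (leq 2) (a0 :: s) -> all (leq 2) (b0 :: s') ->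
  hj_value a0 s = hj_value b0 s' -> a0 = b0.
Proof.
move=> /hj_value_bounds[/andP[a_lo a_hi] _] /hj_value_bounds[/andP[b_lo b_hi] _] v_eq.
have lt_succ m n : (m%:R : rat) < n%:R + 1 -> (m <= n)%N by rewrite natr1 ltr_nat ltnS.
by apply/eqP; rewrite eqn_leq !lt_succ //; lra.
Qed.

Lemma hj_value_inj a0 s b0 s' : all (leq 2) (a0 :: s) -> all (leq 2) (b0 :: s') ->
  hj_value a0 s = hj_value b0 s' -> a0 :: s = b0 :: s'.
Proof.
elim: s a0 b0 s' => [|a1 s IHs] a0 b0 s' a_ge2 b_ge2 v_eq;
  have a0_eq := hj_value_head a_ge2 b_ge2 v_eq; subst b0.
  by have [_ ->] := hj_value_bounds b_ge2.
case: s' b_ge2 v_eq => [|b1 s'] b_ge2 v_eq.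
  by have [_ ] := hj_value_bounds a_ge2; rewrite v_eq => /(_ erefl).
case/andP: a_ge2 => _ a_ge2; case/andP: b_ge2 => _ b_ge2.
by move: v_eq => /= /addrI /oppr_inj /invr_inj /(IHs _ _ _ a_ge2 b_ge2) ->.
Qed.

Lemma hj_exists n d : (0 < d < n)%N -> exists a0 s, is_hj_expansion n d a0 s.
Proof.
elim: d {-2}d (leqnn d) n => [|D IHd] d d_le n /andP[d_gt0 d_lt_n]; first by lia.
have nE := divn_eq n d; set q := (n %/ d)%N in nE *; set r := (n %% d)%N in nE *.
have r_lt_d : (r < d)%N by rewrite ltn_mod.
have d_neq0 : (d%:R : rat) != 0 by rewrite pnatr_eq0 -lt0n.
have [r0 | r_gt0] := posnP r.
  exists q, [::]; split; first by rewrite /= andbT; nia.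
  by rewrite /= nE r0 addn0 natrM mulfK.
have [b0 [s [b_ge2 v_eq]]] := IHd (d - r)%N ltac:(lia) d ltac:(lia).
exists q.+1, (b0 :: s); split; first by move: b_ge2 => /= ->; rewrite andbT; nia.
rewrite /= v_eq invf_div nE natrB ?(ltnW r_lt_d) // natrD natrM.
by field.
Qed.

Lemma hj_mat_frac n d a0 s : is_hj_expansion n d a0 s -> (0 < d)%N -> coprime n d ->
  m11 (hj_mat (a0 :: s)) = n /\ m21 (hj_mat (a0 :: s)) = d.
Proof.
case=> a_ge2 v_eq d_gt0 co_nd; rewrite hj_valueE // in v_eq.
have := det_hj_mat (a0 :: s); have /andP[r_gt0 _] := hj_mat_gt0 a_ge2 isT.
case: (hj_mat _) v_eq r_gt0 => p q r t /= v_eq r_gt0; rewrite /det2 /= => det.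
have co_pr : coprime `|p| `|r|.
  by rewrite -coprimezE; apply/coprimezP; exists (t, - q) => /=; lia.
split.
- move/(congr1 numq): v_eq.
  by rewrite coprimeq_num // (@coprimeq_num n d co_nd) !gtr0_sg ?mul1r //; lia.
- move/(congr1 denq): v_eq.
  by rewrite coprimeq_den // (@coprimeq_den n d co_nd) !gt_eqF ?gtr0_norm //; lia.
Qed.

Lemma int_even_or_odd (x : int) : exists y, x = 2 * y \/ x = 2 * y + 1.
Proof. by exists (x %/ 2)%Z; lia. Qed.

Lemma hj_mat_cat_rev_diag A :
  ~~ ((2 %| m11 (hj_mat (A ++ rev A))) && (2 %| m22 (hj_mat (A ++ rev A))))%Z.
Proof.
rewrite hj_mat_cat hj_mat_rev; have := det_hj_mat A.
case: (hj_mat A) => a b c d; rewrite /det2 /=.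
have [a' [->|->]] := int_even_or_odd a; have [b' [->|->]] := int_even_or_odd b;
have [c' [->|->]] := int_even_or_odd c; have [d' [->|->]] := int_even_or_odd d;
  lia.
Qed.

Lemma hj_mat_cat_cons_rev_diag A c :
  ((2 %| m11 (hj_mat (A ++ c :: rev A))) && (2 %| m22 (hj_mat (A ++ c :: rev A))))%Z
  = ~~ odd c.
Proof.
rewrite hj_mat_cat hj_mat_cons hj_mat_rev; have := det_hj_mat A.
case: (hj_mat A) => a b e f; rewrite /det2 /= -(odd_double_half c).
move: (c./2) (odd c) => k [|] /=; rewrite odd_double /=; last first.
  by move=> _; apply/andP; split; lia.
move=> det; apply/negbTE; move: det.
by have [a' [->|->]] := int_even_or_odd a; have [e' [->|->]] := int_even_or_odd e; lia.
Qed.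

Lemma hj_palindrome_parity l : rev l = l ->
  odd (size l) && ~~ odd (nth 0%N l (size l)./2)
  = ((2 %| m11 (hj_mat l)) && (2 %| m22 (hj_mat l)))%Z.
Proof.
move=> l_pal; have /= := palindrome_split 0%N l_pal.
case: ifP => _ lE; rewrite [in hj_mat l]lE; first by rewrite hj_mat_cat_cons_rev_diag.
by rewrite (negbTE (hj_mat_cat_rev_diag _)).
Qed.

Lemma hj_palindromeP a0 s : all (leq 2) (a0 :: s) ->
  rev (a0 :: s) = a0 :: s <-> m12 (hj_mat (a0 :: s)) = - m21 (hj_mat (a0 :: s)).
Proof.
move=> a_ge2; split=> [l_pal | m12E].
  by have := congr1 m21 (hj_mat_rev (a0 :: s)); rewrite l_pal /= => ->; rewrite opprK.
have : all (leq 2) (rev (a0 :: s)) by rewrite all_rev.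
case rE : (rev _) => [|b0 s'] b_ge2; first by move/(congr1 size): rE; rewrite size_rev.
apply/(hj_value_inj b_ge2 a_ge2).
rewrite !hj_valueE // -rE hj_mat_rev.
by case: (hj_mat _) m12E => p q r t /= ->; rewrite opprK.
Qed.

Lemma det_sqr_mod_double (n d : nat) (q t : int) :
  n%:Z * t - q * d%:Z = 1 -> (0 < d < n)%N -> 0 < - q < n%:Z ->
  q = - d%:Z /\ (2 %| t)%Z <-> d ^ 2 = 1 %[mod n.*2].
Proof.
move=> det /andP[d_gt0 d_lt_n] /andP[q_lt0 q_gtn].
split=> [[qE /dvdzP[j tE]] | sqr_mod].
  rewrite qE tE in det.
  by rewrite (_ : d ^ 2 = `|j| * n.*2 + 1)%N ?modnMDl //; nia.
set k := (d ^ 2 %/ n.*2)%N.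
have sqrE : (d ^ 2 = k * n.*2 + 1)%N.
  by rewrite {1}(divn_eq (d ^ 2) n.*2) sqr_mod modn_small //; lia.
have sumE : d%:Z + q = n%:Z * (t * d%:Z - 2 * k%:Z * q).
  have sqrE' : d%:Z * d%:Z = 2 * n%:Z * k%:Z + 1 by lia.
  have := congr1 ( *%R^~ d%:Z) det; have := congr1 ( *%R^~ q) sqrE'; rewrite /=.
  lia.
have qE : q = - d%:Z.
  move: sumE; move: (_ - _) => X sumE.
  have X0 : X = 0 by nia.
  by move: sumE; rewrite X0 mulr0; lia.
rewrite qE in det; split=> //; apply/dvdzP; exists (- k%:Z); nia.
Qed.

Lemma hj_critical_expansionP a0 s : all (leq 2) (a0 :: s) ->
  let M := hj_mat (a0 :: s) in
  rev (a0 :: s) = a0 :: s /\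
    odd (size (a0 :: s)) && ~~ odd (nth 0%N (a0 :: s) (size (a0 :: s))./2)
  <-> [/\ m12 M = - m21 M, (2 %| m11 M)%Z & (2 %| m22 M)%Z].
Proof.
move=> a_ge2 M; split=> [[pal] | [sym m11_even m22_even]].
  by rewrite hj_palindrome_parity // => /andP[]; split=> //; apply/hj_palindromeP.
have pal : rev (a0 :: s) = a0 :: s by apply/hj_palindromeP.
by split; rewrite // hj_palindrome_parity // m11_even.
Qed.

Lemma critical_pairP n d : (0 < d < n)%N -> coprime n d ->
  critical_pair n d <-> ~~ odd n /\ d ^ 2 = 1 %[mod n.*2].
Proof.
move=> d_bnd co_nd; have /andP[d_gt0 d_lt_n] := d_bnd.
have [a0 [s hj]] := hj_exists d_bnd; have [a_ge2 _] := hj.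
have critE : critical_pair n d <->
    rev (a0 :: s) = a0 :: s /\ ~~ odd (size s) && ~~ odd (nth 0%N (a0 :: s) (size s)./2).
  split=> [[_ [_ [_ [b0 [s' [hj' pal s'_even c_even]]]]]] | [pal /andP[s_even c_even]]].
    have [b_ge2 v_eq] := hj'.
    have := hj_value_inj b_ge2 a_ge2 (etrans v_eq (esym hj.2)).
    by case=> <- <-; rewrite s'_even c_even.
  by do 3!split=> //; exists a0, s.
have parityE : ~~ odd (size s) && ~~ odd (nth 0%N (a0 :: s) (size s)./2)
    = odd (size (a0 :: s)) && ~~ odd (nth 0%N (a0 :: s) (size (a0 :: s))./2).
  by rewrite /= uphalf_half; case: (odd (size s)).
have : rev (a0 :: s) != [::] by rewrite -size_eq0 size_rev.
move/(hj_mat_gt0 (etrans (all_rev _ _) a_ge2)); rewrite hj_mat_rev => q_bnd.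
have [nE dE] := hj_mat_frac hj d_gt0 co_nd.
have det := det_hj_mat (a0 :: s).
rewrite critE parityE hj_critical_expansionP //.
case: (hj_mat _) nE dE det q_bnd => p q r t /= -> -> det q_bnd.
rewrite -(det_sqr_mod_double det d_bnd q_bnd) -dvdn2.
by split=> [[? ? ?] | [? []]].
Qed.

Local Close Scope ring_scope.

Theorem corollary1p8 (n d : nat) :
  1 <= d <= n -> coprime n d ->
  (critical_pair n d <->
     [/\ d ^ 2 = 1 %[mod n],
         1 <= logn 2 n
       & (d = 1 %[mod 2 ^ logn 2 n] \/ d + 1 = 0 %[mod 2 ^ logn 2 n])]).
Proof.
move=> /andP[d_gt0 d_le_n] co_nd.
have n_gt0 : 0 < n := leq_trans d_gt0 d_le_n.
apply: iff_trans (sqr_eq1_mod_double d n_gt0).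
have [d_lt_n | n_le_d] := ltnP d n; first by apply: critical_pairP; rewrite ?d_gt0.
have n1 : n = 1 by move: co_nd; rewrite (@anti_leq d n) ?d_le_n // /coprime gcdnn => /eqP.
by rewrite n1; split=> [[_ [d_lt1 _]] | []] //; lia.
Qed.
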